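(* Let $\Sigma$ be a finite non-empty alphabet, $V=\mathbb{R}^d$ with a fixed norm $|\cdot|_V$, $W=\mathbb{R}^N$ with a fixed norm $|\cdot|_W$, $\lambda>0$, and $\mathbf{h},\mathbf{g}\colon\Sigma^*\to V$. Then: (1) There exists a constant $c(\lambda)>0$ such that for every $\psi\in\mathrm{Aff}(V,W)$, $$d_{\infty,\Delta}(\mathrm{softmax}_\lambda\circ\psi\circ\mathbf{h},\ \mathcal{V}_N(\mathbf{g}))\le c(\lambda)\,\|\psi_{\mathrm{lin}}\|\ \inf_{\phi\in\mathrm{Aff}(V)}\|\mathbf{h}-\phi\circ\mathbf{g}\|_\infty.$$ (2) $d_{\mathcal{V}(V,\Delta)}(\mathbf{h},\mathbf{g})\le c(\lambda)\, d_{\mathrm{Aff}(V,W)}(\mathbf{h},\mathbf{g})$. (3) If $\inf_{\phi\in\mathrm{Aff}(V)}\|\mathbf{h}-\phi\circ\mathbf{g}\|_\infty=0$ then $d_{\mathrm{Aff}(V,W)}(\mathbf{h},\mathbf{g})=0$, and if $d_{\mathrm{Aff}(V,W)}(\mathbf{h},\mathbf{g})=0$ then $d_{\mathcal{V}(V,\Delta)}(\mathbf{h},\mathbf{g})=0$.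
   Context: $\mathrm{Aff}(V)$ is the group of invertible affine maps of $V$; $\mathrm{Aff}(V,W)$ is the set of affine maps $\psi(\mathbf{v})=\psi_{\mathrm{lin}}\mathbf{v}+\mathbf{b}$ with $\psi_{\mathrm{lin}}\colon V\to W$ linear and $\mathbf{b}\in W$; $\|\psi_{\mathrm{lin}}\|$ is its operator norm with respect to $|\cdot|_V,|\cdot|_W$. For maps into $V$, $\|\mathbf{f}\|_\infty=\sup_{\mathbf{y}\in\Sigma^*}|\mathbf{f}(\mathbf{y})|_V$; $d_{\infty,W}(\mathbf{f},\mathbf{f}')=\sup_{\mathbf{y}}|\mathbf{f}(\mathbf{y})-\mathbf{f}'(\mathbf{y})|_W$ for maps into $W$; $d_{\infty,\Delta}(p,q)=\sup_{\mathbf{y}}|p(\mathbf{y})-q(\mathbf{y})|_W$ for maps $p,q\colon\Sigma^*\to\Delta^{N-1}$ (the probability simplex in $\mathbb{R}^N$); all these take values in $[0,\infty]$. For a distance $d$, $d(x,E)=\inf_{y\in E}d(x,y)$ and $d^{\mathcal{H}}(E,E')=\sup_{x\in E}d(x,E')$. $\mathrm{softmax}_\lambda(\mathbf{x})_i=e^{\lambda x_i}/\sum_je^{\lambda x_j}$. Set $\mathrm{Aff}_{V,W}(\mathbf{h})=\{\psi\circ\mathbf{h}:\psi\in\mathrm{Aff}(V,W)\}$, $\mathcal{V}_N(\mathbf{h})=\{\mathrm{softmax}_\lambda\circ\psi\circ\mathbf{h}:\psi\in\mathrm{Aff}(V,W)\}$, $d_{\mathrm{Aff}(V,W)}(\mathbf{h},\mathbf{g})=d^{\mathcal{H}}_{\infty,W}(\mathrm{Aff}_{V,W}(\mathbf{h}),\mathrm{Aff}_{V,W}(\mathbf{g}))$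 and $d_{\mathcal{V}(V,\Delta)}(\mathbf{h},\mathbf{g})=d^{\mathcal{H}}_{\infty,\Delta}(\mathcal{V}_N(\mathbf{h}),\mathcal{V}_N(\mathbf{g}))$. *)

From HB Require Import structures.
From mathcomp Require Import all_boot all_order all_algebra.
From mathcomp Require Import all_classical all_reals all_analysis.
Set Implicit Arguments. Unset Strict Implicit. Unset Printing Implicit Defensive.
Import Order.TTheory GRing.Theory Num.Theory.
Local Open Scope classical_set_scope.
Local Open Scope ring_scope.

Section Defs.
Variable R : realType.

Definition is_norm (k : nat) (n : 'rV[R]_k -> R) : Prop :=
  [/\ (forall x, 0 <= n x),
      (forall x, n x = 0 -> x = 0),
      (forall (a : R) x, n (a *: x) = `|a| * n x) &
      (forall x y, n (x + y) <= n x + n y)].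

Definition aff (d N : nat) (A : 'M[R]_(d, N)) (b : 'rV[R]_N) (v : 'rV[R]_d)
  : 'rV[R]_N := v *m A + b.

Definition opnorm (d N : nat) (nV : 'rV[R]_d -> R) (nW : 'rV[R]_N -> R)
  (A : 'M[R]_(d, N)) : \bar R :=
  ereal_sup [set (nW (v *m A))%:E | v in [set v | nV v <= 1]].

Definition softmax (N : nat) (lam : R) (x : 'rV[R]_N) : 'rV[R]_N :=
  \row_i (expR (lam * x 0 i) / \sum_(j < N) expR (lam * x 0 j)).

Variable S : finType.

Definition dinf (k : nat) (n : 'rV[R]_k -> R) (f f' : seq S -> 'rV[R]_k)
  : \bar R := ereal_sup (range (fun y => (n (f y - f' y))%:E)).

Definition supnorm (k : nat) (n : 'rV[R]_k -> R) (f : seq S -> 'rV[R]_k)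
  : \bar R := ereal_sup (range (fun y => (n (f y))%:E)).

(* d(x, E) and the (one-sided) Hausdorff distance d^H(E, E') *)
Definition dist_set (T : Type) (dd : T -> T -> \bar R) (x : T) (E : set T)
  : \bar R := ereal_inf [set dd x y | y in E].
Definition dhaus (T : Type) (dd : T -> T -> \bar R) (E E' : set T) : \bar R :=
  ereal_sup [set dist_set dd x E' | x in E].

Definition inf_aff (d : nat) (nV : 'rV[R]_d -> R) (h g : seq S -> 'rV[R]_d)
  : \bar R :=
  ereal_inf [set supnorm nV (fun y => h y - aff Ab.1 Ab.2 (g y))
            | Ab in [set Ab : 'M[R]_d * 'rV[R]_d | Ab.1 \in unitmx]].

Definition AffVW (d N : nat) (h : seq S -> 'rV[R]_d) : set (seq S -> 'rV[R]_N) :=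
  [set (fun y => aff Ab.1 Ab.2 (h y)) | Ab in [set: 'M[R]_(d, N) * 'rV[R]_N]].
Definition VN (d N : nat) (lam : R) (h : seq S -> 'rV[R]_d)
  : set (seq S -> 'rV[R]_N) :=
  [set (fun y => softmax lam (aff Ab.1 Ab.2 (h y)))
  | Ab in [set: 'M[R]_(d, N) * 'rV[R]_N]].

Definition dAff (d N : nat) (nW : 'rV[R]_N -> R) (h g : seq S -> 'rV[R]_d)
  : \bar R := dhaus (dinf nW) (@AffVW d N h) (@AffVW d N g).
Definition dVDelta (d N : nat) (nW : 'rV[R]_N -> R) (lam : R)
  (h g : seq S -> 'rV[R]_d) : \bar R :=
  dhaus (dinf nW) (@VN d N lam h) (@VN d N lam g).

End Defs.
Arguments AffVW {R S d} N h.
Arguments VN {R S d} N lam h.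
Arguments dAff {R S d N} nW h g.
Arguments dVDelta {R S d N} nW lam h g.

From HB Require Import structures.
From mathcomp Require Import all_boot all_order all_algebra.
From mathcomp Require Import all_classical all_reals all_analysis.
From mathcomp Require Import lra.
Import Order.TTheory GRing.Theory Num.Theory.
Import numFieldNormedType.Exports.
Local Open Scope classical_set_scope.
Local Open Scope ring_scope.

(* Softmax_lam is Lipschitz.  Moving every coordinate by at most t multiplies
   each weight exp(lam x_j), hence also their sum, by a factor in
   [exp(-lam t), exp(lam t)], so an output coordinate p moves to some q with
   p <= exp(2 lam t) q and q <= exp(2 lam t) p; as p, q lie in [0, 1] this gives
   |p - q| <= min(1, exp(2 lam t) - 1) <= 4 lam t.  All norms on R^k being
   equivalent, softmax_lam is c-Lipschitz for |.|_W.  If h is within eps of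
   phi o g, then psi o h is within ||psi_lin|| eps of (psi o phi) o g, and
   psi o phi is again affine; post-composing with softmax_lam multiplies all
   these distances by at most c, which gives (1) and (2), and (3) follows since
   every distance involved is nonnegative. *)

Lemma mx_norm_coord_le {R : realType} k (x : 'rV[R]_k) i : `|x 0 i| <= `|x|.
Proof.
rewrite [leRHS]/Num.norm /= mx_normrE.
exact: (le_bigmax _ (fun ij : 'I_1 * 'I_k => `|x ij.1 ij.2|) (0, i)).
Qed.

Lemma mx_norm_le_coord {R : realType} k (x : 'rV[R]_k) (c : R) :
  0 <= c -> (forall i, `|x 0 i| <= c) -> `|x| <= c.
Proof.
move=> c0 xc; rewrite [leLHS]/Num.norm /= mx_normrE.
by apply: bigmax_le => // -[a b] _ /=; rewrite (ord1 a).
Qed.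

Section Softmax.
Context {R : realType}.

Lemma expR_le1D2x (u : R) : 0 <= u -> u <= 1 / 2 -> expR u <= 1 + 2 * u.
Proof.
move=> u0 u_half.
have expR_mul1B_le1 : expR u * (1 - u) <= 1.
  have := expR_ge1Dx (- u); rewrite expRN -(ler_pM2r (expR_gt0 u)) mulVf ?gt_eqF ?expR_gt0 //.
  by rewrite mulrC.
have expR_le2 : expR u <= 2 by nra.
nra.
Qed.

Context {N : nat} {lam : R}.

Lemma softmax_ge0 (x : 'rV[R]_N) i : 0 <= softmax lam x 0 i.
Proof. by rewrite mxE divr_ge0 ?expR_ge0 ?sumr_ge0 // => j _; exact: expR_ge0. Qed.

Lemma expR_le_sum (x : 'rV[R]_N) i :
  expR (lam * x 0 i) <= \sum_j expR (lam * x 0 j).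
Proof. by rewrite (bigD1 i) //= lerDl sumr_ge0 // => j _; exact: expR_ge0. Qed.

Lemma softmax_le1 (x : 'rV[R]_N) i : softmax lam x 0 i <= 1.
Proof.
rewrite mxE ler_pdivrMr ?mul1r ?expR_le_sum //.
exact: lt_le_trans (expR_gt0 _) (expR_le_sum x i).
Qed.

Hypothesis lam_ge0 : 0 <= lam.

Lemma softmax_le_expR (x y : 'rV[R]_N) (t : R) :
  (forall j, `|x 0 j - y 0 j| <= t) ->
  forall i, softmax lam x 0 i <= expR (2 * lam * t) * softmax lam y 0 i.
Proof.
move=> xy i; set a := expR (lam * t).
have expR_le : forall u v : 'rV[R]_N, (forall j, `|u 0 j - v 0 j| <= t) ->
    forall j, expR (lam * u 0 j) <= a * expR (lam * v 0 j).
  move=> u v uv j; rewrite -expRD ler_expR -mulrDr ler_wpM2l // -lerBlDr.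
  exact: le_trans (ler_norm _) (uv j).
have sum_le : \sum_j expR (lam * y 0 j) <= a * \sum_j expR (lam * x 0 j).
  rewrite mulr_sumr; apply: ler_sum => j _; apply: expR_le => k.
  by rewrite distrC.
have sum_gt0 (z : 'rV[R]_N) : 0 < \sum_j expR (lam * z 0 j).
  exact: lt_le_trans (expR_gt0 _) (expR_le_sum z i).
have sum_inv_le : (\sum_j expR (lam * x 0 j))^-1 <= a / \sum_j expR (lam * y 0 j).
  by rewrite ler_pdivlMr // mulrC ler_pdivrMr.
rewrite !mxE -mulrA expRM_natl expr2.
rewrite mulrACA; apply: ler_pM; rewrite ?expR_ge0 ?invr_ge0 ?(ltW (sum_gt0 x)) //.
exact: expR_le.
Qed.

Lemma softmax_coord_lipschitz (x y : 'rV[R]_N) (t : R) i :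
  (forall j, `|x 0 j - y 0 j| <= t) ->
  `|softmax lam x 0 i - softmax lam y 0 i| <= 4 * lam * t.
Proof.
move=> xy; have t0 : 0 <= t := le_trans (normr_ge0 _) (xy i).
have yx j : `|y 0 j - x 0 j| <= t by rewrite distrC.
have := softmax_le_expR _ _ _ xy i; have := softmax_le_expR _ _ _ yx i.
have := softmax_ge0 x i; have := softmax_ge0 y i.
have := softmax_le1 x i; have := softmax_le1 y i.
have B1 : 1 <= expR (2 * lam * t) by rewrite -expR0 ler_expR !mulr_ge0.
move: B1; set p := softmax lam x 0 i; set q := softmax lam y 0 i.
set B := expR _ => B1 q1 p1 q0 p0 qp pq.
rewrite ler_norml; have [u_small|u_big] := lerP (2 * lam * t) (1 / 2).
  have u0 : 0 <= 2 * lam * t by rewrite !mulr_ge0.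
  have := expR_le1D2x _ u0 u_small; rewrite -/B => B_le.
  apply/andP; split; nra.
apply/andP; split; lra.
Qed.

Lemma softmax_mx_lipschitz (x y : 'rV[R]_N) :
  `|softmax lam x - softmax lam y| <= 4 * lam * `|x - y|.
Proof.
apply: mx_norm_le_coord => [|i]; first by rewrite !mulr_ge0.
have := softmax_coord_lipschitz x y `|x - y| i; rewrite !mxE; apply=> j.
by have := mx_norm_coord_le _ (x - y) j; rewrite !mxE.
Qed.

End Softmax.

Section NormEquivalence.
Context {R : realType} {k : nat} {n : 'rV[R]_k -> R}.
Hypothesis n_norm : is_norm n.

Lemma is_norm0 : n 0 = 0.
Proof. by case: n_norm => _ _ nZ _; rewrite -(scale0r 0) nZ normr0 mul0r. Qed.

Lemma is_normN x : n (- x) = n x.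
Proof. by case: n_norm => _ _ nZ _; rewrite -scaleN1r nZ normrN normr1 mul1r. Qed.

Lemma is_norm_sum I (r : seq I) (P : pred I) (F : I -> 'rV[R]_k) :
  n (\sum_(i <- r | P i) F i) <= \sum_(i <- r | P i) n (F i).
Proof.
case: n_norm => _ _ _ nD; elim/big_ind2: _ => [|u a v b ua vb|//].
  by rewrite is_norm0.
exact: le_trans (nD _ _) (lerD ua vb).
Qed.

Lemma is_norm_le_mx_norm : exists M, 0 < M /\ forall x, n x <= M * `|x|.
Proof.
case: n_norm => n_ge0 _ nZ _.
exists (1 + \sum_j n (delta_mx 0 j)); split; first by rewrite ltr_wpDr // sumr_ge0.
move=> x; rewrite {1}(row_sum_delta x); apply: le_trans (is_norm_sum _ _ _ _) _.
rewrite mulrDl mul1r mulr_suml ler_wpDl // ler_sum // => j _.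
by rewrite nZ mulrC ler_wpM2l // mx_norm_coord_le.
Qed.

Lemma is_norm_lerB x y : n x - n y <= n (x - y).
Proof. by case: n_norm => _ _ _ nD; rewrite lerBlDr -{1}(subrK y x) nD. Qed.

Lemma is_norm_dist_le x y : `|n x - n y| <= n (x - y).
Proof.
have := is_norm_lerB y x; rewrite -[y - x]opprB is_normN.
by have := is_norm_lerB x y; rewrite ler_norml; lra.
Qed.

Lemma is_norm_continuous : continuous n.
Proof.
have [M [M_gt0 nM]] := is_norm_le_mx_norm.
move=> x; apply/(@cvgrPdist_lt _ _ _ _ (nbhs_filter x)) => e e_gt0; near=> y.
apply: le_lt_trans (is_norm_dist_le _ _) _; apply: le_lt_trans (nM _) _.
rewrite -ltr_pdivlMl //; near: y.
by apply: cvgr_dist_lt => //; rewrite mulr_gt0 ?invr_gt0.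
Unshelve. all: by end_near.
Qed.

Lemma mx_norm_le_is_norm : exists m, 0 < m /\ forall x, m * `|x| <= n x.
Proof.
case: (n_norm) => n_ge0 n_eq0 nZ _.
pose sphere := [set x : 'rV[R]_k | `|x| = 1].
have normalize_sphere x : x != 0 -> sphere (`|x|^-1 *: x).
  move=> x0; rewrite /sphere /= normrZ normrV ?unitfE ?normr_eq0 //.
  by rewrite normr_id mulVf // normr_eq0.
have [sphere0|sphere_empty] := pselect (sphere !=set0); last first.
  exists 1; split => // x; have [->|x0] := eqVneq x 0; first by rewrite normr0 mulr0.
  by exfalso; apply: sphere_empty; exists (`|x|^-1 *: x); exact: normalize_sphere.
have sphere_compact : compact sphere.
  apply: bounded_closed_compact.
    apply: filterS (nbhs_pinfty_ge (r := 1) _) => // M M_ge1 x.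
    by rewrite /sphere /= => ->.
  apply: (@preimage_closed _ _ (fun x : 'rV[R]_k => `|x|) [set 1]); last exact: closed_eq.
  by move=> x _; exact: norm_continuous.
have n_cont : {within sphere, continuous n}.
  exact: continuous_subspaceT is_norm_continuous.
have [c] := EVT_min_rV sphere0 sphere_compact n_cont.
rewrite inE => c_sphere c_min.
have c_neq0 : c != 0.
  by apply/eqP => c0; move: c_sphere; rewrite c0 /sphere /= normr0 => /esym/eqP; rewrite oner_eq0.
exists (n c); split; first by rewrite lt_def n_ge0 andbT; apply: contra c_neq0 => /eqP/n_eq0->.
move=> x; have [->|x0] := eqVneq x 0; first by rewrite normr0 mulr0.
have := c_min _ (mem_set (normalize_sphere x x0)).
by rewrite nZ normrV ?unitfE ?normr_eq0 // normr_id ler_pdivlMl ?normr_gt0 // mulrC.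
Qed.

End NormEquivalence.

Lemma softmax_lipschitz {R : realType} N (nW : 'rV[R]_N -> R) (lam : R) :
  is_norm nW -> 0 <= lam ->
  exists c, 0 < c /\ forall x y, nW (softmax lam x - softmax lam y) <= c * nW (x - y).
Proof.
move=> nW_norm lam0.
have [M [M_gt0 nW_le]] := is_norm_le_mx_norm nW_norm.
have [m [m_gt0 le_nW]] := mx_norm_le_is_norm nW_norm.
exists (M * (4 * lam + 1) / m); split; first by rewrite !mulr_gt0 ?invr_gt0 // ltr_wpDl ?mulr_ge0.
move=> x y; apply: le_trans (nW_le _) _; rewrite -!mulrA ler_pM2l //.
apply: le_trans (softmax_mx_lipschitz lam0 _ _) _.
by apply: ler_pM; rewrite ?mulr_ge0 ?lerDl // mulrC ler_pdivlMr // mulrC.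
Qed.

Section OperatorNorm.
Context {R : realType} {d N : nat} {nV : 'rV[R]_d -> R} {nW : 'rV[R]_N -> R}.
Hypotheses (nV_norm : is_norm nV) (nW_norm : is_norm nW).

Lemma mulmx_bounded (A : 'M[R]_(d, N)) :
  exists K, 0 <= K /\ forall x, nW (x *m A) <= K * nV x.
Proof.
have [m [m_gt0 le_nV]] := mx_norm_le_is_norm nV_norm.
case: nW_norm => nW_ge0 _ nWZ _.
exists ((\sum_i nW (row i A)) / m); split; first by rewrite divr_ge0 ?sumr_ge0 ?ltW.
move=> x; rewrite mulmx_sum_row; apply: le_trans (is_norm_sum nW_norm _ _ _ _) _.
apply: (@le_trans _ _ (\sum_i `|x| * nW (row i A))).
  by apply: ler_sum => i _; rewrite nWZ ler_wpM2r ?mx_norm_coord_le.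
rewrite -mulr_sumr mulrC -mulrA ler_wpM2l ?sumr_ge0 //.
by rewrite ler_pdivlMl // mulrC.
Qed.

Lemma opnorm_finite (A : 'M[R]_(d, N)) :
  exists r, [/\ 0 <= r, opnorm nV nW A = r%:E & forall x, nW (x *m A) <= r * nV x].
Proof.
have [K [K_ge0 AK]] := mulmx_bounded A.
case: (nV_norm) => nV_ge0 nV_eq0 nVZ _.
have opnorm_le : (opnorm nV nW A <= K%:E)%E.
  apply: ge_ereal_sup => _ [v /= v_le1 <-]; rewrite lee_fin.
  by apply: le_trans (AK v) _; rewrite ler_piMr.
have opnorm_ge0 : (0 <= opnorm nV nW A)%E.
  apply: le_ereal_sup_tmp; exists (nW (0 *m A))%:E; first by exists 0; rewrite //= is_norm0.
  by rewrite mul0mx is_norm0.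
move: opnorm_le opnorm_ge0; case opnormA: (opnorm nV nW A) => [r| |] //= _ r_ge0.
exists r; split => // x; have [x0|x_neq0] := eqVneq (nV x) 0.
  by rewrite x0 mulr0 (nV_eq0 _ x0) mul0mx is_norm0.
have x_gt0 : 0 < nV x by rewrite lt_def x_neq0 nV_ge0.
have : ((nW (((nV x)^-1 *: x) *m A))%:E <= opnorm nV nW A)%E.
  apply: ereal_sup_ubound; exists ((nV x)^-1 *: x) => //=.
  by rewrite nVZ ger0_norm ?invr_ge0 ?nV_ge0 // mulVf.
rewrite opnormA lee_fin -scalemxAl.
case: nW_norm => _ _ -> _.
by rewrite ger0_norm ?invr_ge0 ?nV_ge0 // ler_pdivrMl // mulrC.
Qed.

End OperatorNorm.

Section Hausdorff.
Context {R : realType}.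
Local Open Scope ereal_scope.

Lemma lee_mul_ereal_inf (K : R) (x : \bar R) (E : set (\bar R)) :
  (0 <= K)%R -> E !=set0 -> (forall e, E e -> x <= K%:E * e) ->
  x <= K%:E * ereal_inf E.
Proof.
rewrite le_eqVlt => /orP[/eqP K0 [e0 Ee0] xE|K_gt0 _ xE].
  by have := xE _ Ee0; rewrite -K0 !mul0e.
by rewrite -ereal_inf_pZl //; apply: le_ereal_inf_tmp => _ [e Ee <-]; exact: xE.
Qed.

Context {T : Type} (dd : T -> T -> \bar R).

Lemma dist_set_ge0 x E : (forall y, 0 <= dd x y) -> 0 <= dist_set dd x E.
Proof. by move=> dd_ge0; apply: le_ereal_inf_tmp => _ [y _ <-]. Qed.

Lemma dhaus_ge0 E E' : (forall x y, 0 <= dd x y) -> E !=set0 -> 0 <= dhaus dd E E'.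
Proof.
move=> dd_ge0 [x Ex]; apply: le_ereal_sup_tmp.
by exists (dist_set dd x E'); [exists x | exact: dist_set_ge0].
Qed.

Variables (phi : T -> T) (c : R).
Hypotheses (c_ge0 : (0 <= c)%R) (phi_lipschitz : forall x y, dd (phi x) (phi y) <= c%:E * dd x y).

Lemma dist_set_image_le x E : E !=set0 ->
  dist_set dd (phi x) (phi @` E) <= c%:E * dist_set dd x E.
Proof.
move=> [y0 Ey0]; apply: lee_mul_ereal_inf => [//|/=|_ [y Ey <-]].
  by exists (dd x y0); exists y0.
apply: le_trans (phi_lipschitz x y).
by apply: ereal_inf_lbound; exists (phi y) => //; exists y.
Qed.

Lemma dhaus_image_le E E' : E' !=set0 ->
  dhaus dd (phi @` E) (phi @` E') <= c%:E * dhaus dd E E'.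
Proof.
move=> E'0; apply: ge_ereal_sup => _ [_ [x Ex <-] <-].
apply: le_trans (dist_set_image_le _ _ E'0) _.
by rewrite lee_wpmul2l ?lee_fin //; apply: ereal_sup_ubound; exists x.
Qed.

End Hausdorff.

Section SupDistance.
Context {R : realType} {S : finType}.
Local Open Scope ereal_scope.

Lemma dinf_ge0 k (n : 'rV[R]_k -> R) (f f' : seq S -> 'rV[R]_k) :
  is_norm n -> 0 <= dinf n f f'.
Proof.
case=> n_ge0 _ _ _; apply: le_ereal_sup_tmp.
by exists (n (f [::] - f' [::]))%:E; [exists [::] | rewrite lee_fin].
Qed.

Lemma dinf_comp_le k (n : 'rV[R]_k -> R) (phi : 'rV[R]_k -> 'rV[R]_k) (c : R) :
  (0 <= c)%R -> (forall x y, (n (phi x - phi y) <= c * n (x - y))%R) ->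
  forall f f' : seq S -> 'rV[R]_k,
  dinf n (fun y => phi (f y)) (fun y => phi (f' y)) <= c%:E * dinf n f f'.
Proof.
move=> c_ge0 phi_lip f f'; apply: ge_ereal_sup => _ [y _ <-].
apply: le_trans (_ : (c * n (f y - f' y))%:E <= _); first by rewrite lee_fin.
by rewrite EFinM lee_wpmul2l ?lee_fin //; apply: ereal_sup_ubound; exists y.
Qed.

Lemma affB d N (A : 'M[R]_(d, N)) b u v : (aff A b u - aff A b v = (u - v) *m A)%R.
Proof. by rewrite /aff mulmxBl opprD addrACA subrr addr0. Qed.

Lemma aff_comp d N (A : 'M[R]_(d, N)) b (P : 'M[R]_d) q v :
  aff A b (aff P q v) = aff (P *m A) (q *m A + b) v.
Proof. by rewrite /aff mulmxDl mulmxA addrA. Qed.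

Context {d N : nat} {nV : 'rV[R]_d -> R} {nW : 'rV[R]_N -> R}.

Lemma dinf_aff_comp_le (A : 'M[R]_(d, N)) b r (h g : seq S -> 'rV[R]_d) P q :
  (0 <= r)%R -> (forall x, (nW (x *m A) <= r * nV x)%R) ->
  dinf nW (fun y => aff A b (h y)) (fun y => aff (P *m A) (q *m A + b) (g y))
  <= r%:E * supnorm nV (fun y => h y - aff P q (g y))%R.
Proof.
move=> r_ge0 Ar; apply: ge_ereal_sup => _ [y _ <-]; rewrite -aff_comp affB.
apply: le_trans (_ : (r * nV (h y - aff P q (g y)))%:E <= _); first by rewrite lee_fin.
by rewrite EFinM lee_wpmul2l ?lee_fin //; apply: ereal_sup_ubound; exists y.
Qed.

Lemma dist_set_AffVW_le (A : 'M[R]_(d, N)) b r (h g : seq S -> 'rV[R]_d) :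
  (0 <= r)%R -> (forall x, (nW (x *m A) <= r * nV x)%R) ->
  dist_set (dinf nW) (fun y => aff A b (h y)) (AffVW N g) <= r%:E * inf_aff nV h g.
Proof.
move=> r_ge0 Ar; apply: lee_mul_ereal_inf => [//||_ [[P q] _ <-]].
  by eexists; exists (1%:M, 0%R) => //=; exact: unitmx1.
apply: le_trans (dinf_aff_comp_le _ b _ _ _ P q r_ge0 Ar).
by apply: ereal_inf_lbound; eexists; [exists (P *m A, q *m A + b)%R|].
Qed.

Lemma AffVW_neq0 (h : seq S -> 'rV[R]_d) : AffVW N h !=set0.
Proof. by eexists; exists (0%R, 0%R). Qed.

Lemma VN_image (lam : R) (h : seq S -> 'rV[R]_d) :
  VN N lam h = (fun f y => softmax lam (f y)) @` AffVW N h.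
Proof.
apply/seteqP; split=> f.
  by case=> Ab _ <-; exists (fun y => aff Ab.1 Ab.2 (h y)) => //; exists Ab.
by case=> _ [Ab _ <-] <-; exists Ab.
Qed.

End SupDistance.

Theorem mainTheorem4 (R : realType) (S : finType) (HS : (0 < #|S|)%N)
  (d N : nat) (nV : 'rV[R]_d -> R) (nW : 'rV[R]_N -> R)
  (HnV : is_norm nV) (HnW : is_norm nW) (lam : R) (Hlam : 0 < lam) :
  exists c : R, 0 < c /\
  forall h g : seq S -> 'rV[R]_d,
    [/\ (forall (A : 'M[R]_(d, N)) (b : 'rV[R]_N),
          (dist_set (dinf nW) (fun y => softmax lam (aff A b (h y)))
             (VN N lam g)
           <= c%:E * opnorm nV nW A * inf_aff nV h g)%E),
        (dVDelta nW lam h g <= c%:E * dAff nW h g)%E,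
        (inf_aff nV h g = 0%E -> dAff nW h g = 0%E) &
        (dAff nW h g = 0%E -> dVDelta nW lam h g = 0%E)].
Proof.
have [c [c_gt0 softmax_lip]] := softmax_lipschitz _ _ _ HnW (ltW Hlam).
exists c; split => // h g.
have dinf_softmax_le := @dinf_comp_le R S N nW _ c (ltW c_gt0) softmax_lip.
have dinf_nW_ge0 f f' : (0 <= dinf nW f f')%E by exact: dinf_ge0.
have dVDelta_le : (dVDelta nW lam h g <= c%:E * dAff nW h g)%E.
  rewrite /dVDelta !VN_image; apply: dhaus_image_le => //.
  - exact: ltW.
  - exact: AffVW_neq0.
split => //.
- move=> A b; have [r [r_ge0 -> Ar]] := opnorm_finite HnV HnW A.
  rewrite VN_image -muleA.
  apply: le_trans (dist_set_image_le _ _ _ (ltW c_gt0) dinf_softmax_le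
    (fun y => aff A b (h y)) _ (AffVW_neq0 _)) _.
  by apply: lee_wpmul2l; [rewrite lee_fin ltW | exact: dist_set_AffVW_le].
- move=> inf_aff0; apply/eqP; rewrite eq_le dhaus_ge0 ?andbT //; last exact: AffVW_neq0.
  apply: ge_ereal_sup => _ [_ [[A b] _ <-] <-].
  have [r [r_ge0 _ Ar]] := opnorm_finite HnV HnW A.
  by rewrite -(mule0 r%:E) -inf_aff0; exact: dist_set_AffVW_le.
- move=> dAff0; apply/eqP; rewrite eq_le dhaus_ge0 ?andbT //.
    by rewrite -(mule0 c%:E) -dAff0.
  by rewrite VN_image; apply/image_nonempty/AffVW_neq0.
Qed.
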